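(* Let $p\in(0,\infty)$ and let $f:\mathcal{W}_p(\mathcal{X})\to\mathcal{W}_p(\mathcal{X})$ be an isometric embedding, i.e. $W_p(f(\mu),f(\nu))=W_p(\mu,\nu)$ for all $\mu,\nu\in\mathcal{P}(\mathcal{X})$. Then there exists a unique family of measures $\Phi=(\varphi_{x,t})_{x\in\mathcal{X},\,t\in(0,1]}\in\mathcal{M}(\mathcal{X})^{\mathcal{X}\times(0,1]}$ satisfying (a) for all $x\neq y$: $S_{\varphi_{x,1}}\cap S_{\varphi_{y,1}}=\emptyset$; (b) for all $x\in\mathcal{X}$ and $0<t\le 1$: $\varphi_{x,t}(\mathcal{X})=t$; (c) for all $x\in\mathcal{X}$ and $0<s<t\le 1$: $\varphi_{x,s}\le\varphi_{x,t}$; and generating $f$ via $$f(\mu)=\sum_{x\in S_\mu}\varphi_{x,\mu(\{x\})}\qquad\text{for all }\mu\in\mathcal{P}(\mathcal{X}).$$ Conversely, every $\mathcal{X}\times(0,1]$-indexed family of measures in $\mathcal{M}(\mathcal{X})$ satisfying (a)–(c) generates an isometric embedding of $\mathcal{W}_p(\mathcal{X})$ via the formula $f(\mu)=\sum_{x\in S_\mu}\varphi_{x,\mu(\{x\})}$.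
   Context: Let $X$ be a countable set with at least two elements, equipped with the discrete metric $\rho$ ($\rho(x,y)=1$ if $x\neq y$, $\rho(x,x)=0$); write $\mathcal{X}=(X,\rho)$. $\mathcal{P}(\mathcal{X})$ and $\mathcal{M}(\mathcal{X})$ denote the probability measures and nonnegative finite measures on the power set of $\mathcal{X}$. For $\mu\in\mathcal{M}(\mathcal{X})$, $S_\mu=\{x\in\mathcal{X}:\mu(\{x\})>0\}$ is its support. For measures, $\alpha\le\beta$ means $\alpha(A)\le\beta(A)$ for all $A\subseteq\mathcal{X}$. For $\mu,\nu\in\mathcal{P}(\mathcal{X})$, a coupling is a probability measure $\pi$ on $\mathcal{X}^2$ with marginals $\mu,\nu$, and $W_p(\mu,\nu)=\big(\inf_\pi\int\rho^p\,d\pi\big)^{1/p}$ for $p\ge1$, $W_p(\mu,\nu)=\inf_\pi\int\rho^p\,d\pi$ for $0<p<1$. $\mathcal{W}_p(\mathcal{X})$ is the metric space $(\mathcal{P}(\mathcal{X}),W_p)$. An isometric embedding is a (not necessarily surjective) distance-preserving self-map of $\mathcal{W}_p(\mathcal{X})$. *)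

From HB Require Import structures.
From mathcomp Require Import all_boot all_order all_algebra.
From mathcomp Require Import all_classical all_reals all_analysis.
Set Implicit Arguments. Unset Strict Implicit. Unset Printing Implicit Defensive.
Import Order.TTheory GRing.Theory Num.Theory.
Local Open Scope classical_set_scope.
Local Open Scope ring_scope.

Definition discr (T : pointedType) : Type := T.
HB.instance Definition _ (T : pointedType) := Pointed.on (discr T).
HB.instance Definition _ (T : pointedType) :=
  @isMeasurable.Build default_measure_display (discr T) discrete_measurable
    discrete_measurable0 discrete_measurableC discrete_measurableU.

Section Wasserstein.
Context {R : realType} {T : pointedType}.

Definition rho (x y : T) : R := if x == y then 0 else 1.

Definition msupport (m : set (discr T) -> \bar R) : set T :=
  [set x | (0 < m [set x])%E].

Definition coupling (mu nu : probability (discr T) R) :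
    set (probability (discr (T * T)%type) R) :=
  [set pi | (forall A : set T, pi (fst @^-1` A) = mu A) /\
            (forall A : set T, pi (snd @^-1` A) = nu A)].

Definition tcost (p : R) (pi : probability (discr (T * T)%type) R) : \bar R :=
  (\int[pi]_z ((rho z.1 z.2) `^ p)%:E)%E.

Definition Wp (p : R) (mu nu : probability (discr T) R) : R :=
  let c := fine (ereal_inf [set tcost p pi | pi in coupling mu nu]) in
  if 1 <= p then c `^ p^-1 else c.

Definition isometric_embedding (p : R)
    (f : probability (discr T) R -> probability (discr T) R) : Prop :=
  forall mu nu, Wp p (f mu) (f nu) = Wp p mu nu.

(* a mfamily Phi = (phi_{x,t})_{x in X, t in (0,1]} of finite measures;
   values for t outside (0,1] are irrelevant *)
Definition mfamily := T -> R -> {finite_measure set (discr T) -> \bar R}.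

Definition family_ok (Phi : mfamily) : Prop :=
  [/\ (forall x y, x <> y -> msupport (Phi x 1) `&` msupport (Phi y 1) = set0),
      (forall x t, 0 < t <= 1 -> Phi x t setT = t%:E) &
      (forall x s t, 0 < s -> s < t -> t <= 1 ->
         forall A, (Phi x s A <= Phi x t A)%E)].

Definition generates (Phi : mfamily)
    (f : probability (discr T) R -> probability (discr T) R) : Prop :=
  forall mu (A : set T),
    f mu A = (\esum_(x in msupport mu) Phi x (fine (mu [set x])) A)%E.

End Wasserstein.

(* On a discrete space W_p is an increasing function of the total variation
   distance: the coupling that leaves the common mass min(mu{x}, nu{x}) on the
   diagonal is optimal, so the transport cost is 1 - overlap mu nu with
   overlap mu nu = sum_x min(mu{x}, nu{x}).  Hence isometric embeddings are
   exactly the maps preserving the overlap.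
   For such an f the measures f(delta_x) have disjoint supports, because
   overlap delta_x delta_y = 0, and overlap (f delta_x) (f mu) = mu{x} says
   that the part of f(mu) on the support of f(delta_x) has mass mu{x};
   comparing overlaps shows that this part depends only, and monotonically,
   on mu{x}.  Evaluating it on t delta_x + (1 - t) delta_y defines phi_{x,t}.
   Any generating family has phi_{x,1} = f(delta_x) and phi_{x,t} <= phi_{x,1},
   which gives uniqueness.
   Conversely, for a family satisfying (a)-(c) the overlap of two generated
   measures splits over the disjoint supports of the phi_{x,1}, and on the
   piece of x it equals min(mu{x}, nu{x}) by (b) and (c). *)

From HB Require Import structures.
From mathcomp Require Import all_boot all_order all_algebra.
From mathcomp Require Import all_classical all_reals all_analysis.
From mathcomp Require Import lra.
Import Order.TTheory GRing.Theory Num.Theory.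
Set Implicit Arguments. Unset Strict Implicit. Unset Printing Implicit Defensive.
Local Open Scope classical_set_scope.
Local Open Scope ring_scope.
Local Open Scope ereal_scope.

#[local] Hint Extern 0 (_.-measurable _) => exact: I : core.

Lemma countable_subT (T : Type) (A : set T) : countable [set: T] -> countable A.
Proof. exact: sub_countable (subset_card_le (subsetT A)). Qed.

Section esum_lemmas.
Context (R : realType) (T : choiceType).
Implicit Types (a b : T -> \bar R) (S : set T).

Lemma esum_ge_term S a x : (forall i, S i -> 0 <= a i) -> S x ->
  a x <= \esum_(i in S) a i.
Proof.
move=> a0 Sx; apply: esum_ge; exists [set x]; last by rewrite fsbig_set1.
by split; [exact: finite_set1|move=> y ->].
Qed.

Lemma esum_eq0_term S a x : (forall i, S i -> 0 <= a i) ->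
  \esum_(i in S) a i = 0 -> S x -> a x = 0.
Proof.
move=> a0 s0 Sx; apply/eqP; rewrite eq_le a0 // andbT -s0.
exact: esum_ge_term.
Qed.

Lemma esum_only1 S a x : (forall i, S i -> i <> x -> a i = 0) -> S x ->
  0 <= a x -> \esum_(i in S) a i = a x.
Proof.
move=> a0 Sx ax0; rewrite (esumID [set x]); last first.
  by move=> i Si; have [->//|/eqP ix] := eqVneq i x; rewrite a0.
rewrite [X in _ + X]esum1 ?adde0; last by move=> i [Si /= ix]; apply: a0.
by rewrite (_ : S `&` [set x] = [set x]) ?esum_set1 // (setIidr _) // => y ->.
Qed.

Lemma exchange_esum (T' : choiceType) (A : set T) (B : set T')
    (a : T -> T' -> \bar R) : (forall i j, A i -> B j -> 0 <= a i j) ->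
  \esum_(i in A) \esum_(j in B) a i j = \esum_(j in B) \esum_(i in A) a i j.
Proof.
move=> a0; rewrite esum_esum // esum_esum; last by move=> i j Bi Aj; apply: a0.
rewrite (reindex_esum (B `*`` fun=> A) (A `*`` fun=> B) (fun x => (x.2, x.1))) //.
split => /=.
- by move=> [i j] [/= ? ?]; split.
- by move=> [i j] [k l] /= _ _ [-> ->].
- by move=> [i j] [/= ? ?]; exists (j, i).
Qed.

Lemma esumZl S a (k : R) : (0 <= k)%R -> (forall i, 0 <= a i) ->
  \esum_(i in S) (k%:E * a i) = k%:E * \esum_(i in S) a i.
Proof.
move=> k0 a0; rewrite /esum -ereal_supZl //; last first.
  by apply/set0P; exists 0; exists set0; [exact: fsets_set0|rewrite fsbig_set0].
congr ereal_sup; apply/seteqP; split.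
  move=> _ [X XS <-]; exists (\sum_(i \in X) a i); first by exists X.
  by rewrite ge0_mule_fsumr.
by move=> _ [_ [X XS <-] <-]; exists X => //; rewrite ge0_mule_fsumr.
Qed.

Lemma le_esum_eq S a b : (forall i, S i -> 0 <= a i) ->
  (forall i, S i -> a i <= b i) ->
  \esum_(i in S) b i \is a fin_num ->
  \esum_(i in S) a i = \esum_(i in S) b i -> forall x, S x -> a x = b x.
Proof.
move=> a0 ab bfin sab x Sx.
have b0 i : S i -> 0 <= b i by move=> Si; apply: le_trans (ab i Si); exact: a0.
have afin i : S i -> a i \is a fin_num.
  move=> Si; rewrite ge0_fin_numE ?a0 //; apply: le_lt_trans (ab i Si) _.
  by apply: le_lt_trans (esum_ge_term b0 Si) _; rewrite ltey_eq bfin.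
have ba0 i : S i -> 0 <= b i - a i by move=> Si; rewrite suber_ge0 ?afin ?ab.
have E : \esum_(i in S) b i = \esum_(i in S) a i + \esum_(i in S) (b i - a i).
  rewrite -esumD //; apply: eq_esum => i Si.
  by rewrite addeC subeK ?afin.
have D0 : \esum_(i in S) (b i - a i) = 0.
  move: E; rewrite sab; set D := \esum_(i in S) (b i - a i) => E.
  by rewrite -(addeK D bfin) (addeC D) -E subee.
move: (esum_eq0_term ba0 D0 Sx) => ba.
by rewrite -(subeK (b x) (afin x Sx)) ba add0e.
Qed.

Lemma esum_preimage_fst (T' : choiceType) (w : T * T' -> \bar R) (A : set T) :
  (forall z, 0 <= w z) ->
  \esum_(z in fst @^-1` A) w z = \esum_(x in A) \esum_(y in setT) w (x, y).
Proof.
move=> w0; rewrite esum_esum //.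
have -> : A `*`` (fun=> [set: T']) = fst @^-1` A.
  by apply/seteqP; split => [[a b] [] //|[a b] /= Aa]; split.
by apply: eq_esum => -[a b].
Qed.

Lemma esum_preimage_snd (T' : choiceType) (w : T' * T -> \bar R) (A : set T) :
  (forall z, 0 <= w z) ->
  \esum_(z in snd @^-1` A) w z = \esum_(y in A) \esum_(x in setT) w (x, y).
Proof.
move=> w0; rewrite (esum_esum (a := fun y x => w (x, y))) //.
rewrite (reindex_esum (A `*`` fun=> setT) (snd @^-1` A) (fun k => (k.2, k.1))) //.
split => /=.
- by move=> [a b] [/= ? ?].
- by move=> [a b] [c d] /= _ _ [-> ->].
- by move=> [a b] /= Ab; exists (b, a).
Qed.

End esum_lemmas.

Lemma measure_ngt0 d (T : semiRingOfSetsType d) (R : realFieldType)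
    (m : {content set T -> \bar R}) (A : set T) :
  ~ (0 < m A) -> m A = 0.
Proof. by move=> /negP; rewrite -leNgt measure_le0 => /eqP. Qed.

Lemma mine0l (R : realDomainType) (a : \bar R) : 0 <= a -> mine 0 a = 0.
Proof. by move=> a0; apply/min_idPl. Qed.

Section discrete_measures.
Context (R : realType).

Lemma mnormalize_id d (T : measurableType d) (mu : {measure set T -> \bar R})
    (P : probability T R) A :
  mu setT = 1 -> mnormalize mu P A = mu A.
Proof. by move=> mu1; rewrite /mnormalize mu1 ifF ?invr1 ?mule1 // eqe oner_eq0. Qed.

Lemma measure_imageE (T0 : choiceType) (T : pointedType)
    (m : {measure set (discr T) -> \bar R}) (A : set T0) (e : T0 -> T) :
  countable A -> {in A &, injective e} ->
  m (e @` A) = \esum_(x in A) m [set e x].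
Proof.
move=> /countable_injP[g ginj] einj.
pose F n := e @` (A `&` (g @^-1` [set n])).
have UF : e @` A = \bigcup_(n in g @` A) F n.
  apply/seteqP; split => [_ [x Ax <-]|_ [n [x Ax <-] [y [Ay /= gy] <-]]].
    by exists (g x); [exists x|exists x].
  by exists y.
have tF : trivIset (g @` A) F.
  move=> i j _ _ [_ [[x [Ax /= gx] <-] [y [Ay /= gy] eyx]]].
  by rewrite -gx -gy (einj y x) // inE.
rewrite UF measure_bigcup //= nneseries_esum //.
rewrite (_ : [set x | x \in g @` A] = g @` A); last first.
  by apply/seteqP; split => x; rewrite /= inE.
rewrite esum_image; last exact: ginj.
apply: eq_esum => x Ax; congr (m _).
apply/seteqP; split => [_ [y [Ay /= gy] <-]|_ ->] /=.
  by rewrite (ginj y x) // inE.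
by exists x.
Qed.

Lemma measure_atomsE (T : pointedType) (m : {measure set (discr T) -> \bar R})
    (A : set T) :
  countable A -> m A = \esum_(x in A) m [set x].
Proof.
by move=> cA; rewrite -[in LHS](image_id A) (measure_imageE m cA).
Qed.

Context (T : pointedType).

(* Clipping at 0 makes [wmeasure w] a measure for every [w]; [wprob w] is a
   probability for every [w], and coincides with [wmeasure w] when the
   weights sum to 1. *)
Definition wmeasure (w : T -> \bar R) (A : set (discr T)) : \bar R :=
  \esum_(z in A) maxe (w z) 0.

Section wmeasure_measure.
Variable w : T -> \bar R.

Let wmeasure0 : wmeasure w set0 = 0.
Proof. exact: esum_set0. Qed.

Let wmeasure_ge0 A : 0 <= wmeasure w A.
Proof. by apply: esum_ge0 => z _; rewrite le_max lexx orbT. Qed.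

Let wmeasure_sigma_additive : semi_sigma_additive (wmeasure w).
Proof.
move=> F mF tF mU.
suff -> : wmeasure w (\bigcup_n F n) = \sum_(i <oo) wmeasure w (F i).
  exact: is_cvg_nneseries.
rewrite nneseries_esumT //; apply: esum_bigcupT.
- by move=> i j _ _; apply: tF.
- by move=> x; rewrite le_max lexx orbT.
Qed.

HB.instance Definition _ := isMeasure.Build _ _ _ (wmeasure w)
  wmeasure0 wmeasure_ge0 wmeasure_sigma_additive.

End wmeasure_measure.

Definition wprob (w : T -> \bar R) : probability (discr T) R :=
  mnormalize (wmeasure w) (dirac (point : discr T)).

Lemma wprobE (w : T -> \bar R) A : (forall z, 0 <= w z) ->
  \esum_(z in setT) w z = 1 -> wprob w A = \esum_(z in A) w z.
Proof.
move=> w0 w1; have wE B : wmeasure w B = \esum_(z in B) w z.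
  by apply: eq_esum => z _; rewrite max_l.
rewrite /wprob /= mnormalize_id; first exact: wE.
by rewrite -w1; exact: wE.
Qed.

End discrete_measures.

Section overlap.
Context (R : realType) (T : pointedType) (hT : countable [set: T]).
Implicit Types (P Q : probability (discr T) R).

Let cntA (A : set T) : countable A := countable_subT A hT.

Lemma probability_atoms1 P : \esum_(x in setT) P [set x] = 1.
Proof. by rewrite -measure_atomsE; [exact: probability_setT|exact: hT]. Qed.

Definition overlap P Q := \esum_(x in [set: T]) mine (P [set x]) (Q [set x]).

Lemma overlap_ge0 P Q : 0 <= overlap P Q.
Proof. by apply: esum_ge0 => x _; rewrite le_min !measure_ge0. Qed.

Lemma overlap_le1 P Q : overlap P Q <= 1.
Proof.
by rewrite -(probability_atoms1 P); apply: le_esum => x _; rewrite ge_min lexx.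
Qed.

Lemma overlap_fin_num P Q : overlap P Q \is a fin_num.
Proof.
by rewrite ge0_fin_numE ?overlap_ge0 // (le_lt_trans (overlap_le1 P Q)) ?ltey.
Qed.

Lemma tcostE p (pi : probability (discr (T * T)%type) R) : (0 < p)%R ->
  tcost p pi = 1 - \esum_(x in setT) pi [set (x, x)].
Proof.
move=> p0; pose diag : set (T * T) := (fun x => (x, x)) @` setT.
rewrite /tcost (eq_integral (fun z : discr (T * T)%type => (\1_(~` diag) z)%:E));
  last first.
  move=> [a b] _; rewrite /rho indicE /=; have [<-|ab] := eqVneq a b.
    rewrite powR0 ?gt_eqF // (_ : (a, a) \in ~` diag = false) //.
    by apply/negbTE; rewrite in_setC negbK inE; exists a.
  rewrite powR1 (_ : (a, b) \in ~` diag) //.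
  rewrite in_setC; apply/negP; rewrite inE => -[c _ [ca cb]].
  by move: ab; rewrite -ca -cb eqxx.
rewrite integral_indic // setIT.
change (pi (~` diag) = 1 - \esum_(x in setT) pi [set (x, x)]).
by rewrite probability_setC // (measure_imageE pi (cntA setT)) // => x y _ _ [].
Qed.

Lemma tcost_ge_overlap p P Q pi : (0 < p)%R -> coupling P Q pi ->
  1 - overlap P Q <= tcost p pi.
Proof.
move=> p0 [pi1 pi2]; rewrite tcostE //; apply: leeB => //.
apply: le_esum => x _; rewrite le_min -pi1 -pi2.
by apply/andP; split; apply: le_measure; rewrite ?inE // => z ->.
Qed.

End overlap.

Section optimal_coupling.
Context (R : realType) (T : pointedType) (hT : countable [set: T]).
Variables mu nu : probability (discr T) R.

Let pm x : R := fine (mu [set x]).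
Let pn x : R := fine (nu [set x]).
Let mm x : R := Num.min (pm x) (pn x).
Let r : R := fine (1 - overlap mu nu).

Let pmE x : mu [set x] = (pm x)%:E. Proof. by rewrite fineK ?fin_num_measure. Qed.
Let pnE x : nu [set x] = (pn x)%:E. Proof. by rewrite fineK ?fin_num_measure. Qed.
Let mm_ge0 x : (0 <= mm x)%R. Proof. by rewrite le_min !fine_ge0. Qed.
Let pm_res_ge0 x : (0 <= pm x - mm x)%R. Proof. by rewrite subr_ge0 ge_min lexx. Qed.
Let pn_res_ge0 x : (0 <= pn x - mm x)%R.
Proof. by rewrite subr_ge0 ge_min lexx orbT. Qed.
Let rV_ge0 : (0 <= r^-1)%R.
Proof.
by rewrite invr_ge0 fine_ge0 // suber_ge0 ?overlap_fin_num ?overlap_le1.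
Qed.

Let pm1 : \esum_(x in setT) (pm x)%:E = 1.
Proof. by rewrite -(probability_atoms1 hT mu); apply: eq_esum => x _; rewrite pmE. Qed.
Let pn1 : \esum_(x in setT) (pn x)%:E = 1.
Proof. by rewrite -(probability_atoms1 hT nu); apply: eq_esum => x _; rewrite pnE. Qed.

Let overlapE : overlap mu nu = \esum_(x in setT) (mm x)%:E.
Proof. by apply: eq_esum => x _; rewrite pmE pnE EFin_min. Qed.

Let residual_sum (q : T -> R) : (forall x, 0 <= q x - mm x)%R ->
  \esum_(x in setT) (q x)%:E = 1 -> \esum_(x in setT) (q x - mm x)%:E = r%:E.
Proof.
move=> qm q1.
have : \esum_(x in setT) (q x)%:E = overlap mu nu + \esum_(x in setT) (q x - mm x)%:E.
  rewrite overlapE -esumD => [|x _|x _]; rewrite ?lee_fin //.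
  by apply: eq_esum => x _; rewrite -EFinD addrC subrK.
rewrite q1 fineK ?fin_numB ?overlap_fin_num // => ->.
by rewrite addeC addeK // overlap_fin_num.
Qed.

Let residual_scaleK (q : T -> R) : (forall x, 0 <= q x - mm x)%R ->
  \esum_(x in setT) (q x)%:E = 1 -> forall x, ((q x - mm x) * r^-1 * r = q x - mm x)%R.
Proof.
move=> qm q1 x; have [r0|r0] := eqVneq r 0%R; last by rewrite mulfVK.
suff [->] : (q x - mm x)%:E = 0 by rewrite !mul0r.
apply: (esum_eq0_term (S := setT) (a := fun x => (q x - mm x)%:E)) => //.
  by move=> i _; rewrite lee_fin.
by rewrite residual_sum // r0.
Qed.

(* The common mass [mm] stays on the diagonal and the two residuals, both of
   mass [r = 1 - overlap mu nu], are coupled independently; when [r = 0] the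
   residuals vanish, so the junk value [0^-1 = 0] is harmless. *)
Definition opt_weight (z : T * T) : \bar R :=
  ((if z.1 == z.2 then mm z.1 else 0) + (pm z.1 - mm z.1) * (pn z.2 - mm z.2) * r^-1)%:E.

Let opt_weight_ge0 z : 0 <= opt_weight z.
Proof.
rewrite lee_fin addr_ge0 ?mulr_ge0 //; by case: ifP.
Qed.

Let diag_sum (x : T) (b : T -> bool) : (forall y, b y = (x == y)) ->
  \esum_(y in setT) (if b y then mm x else 0)%:E = (mm x)%:E.
Proof.
move=> bE; rewrite (esum_only1 (x := x)) ?bE ?eqxx ?lee_fin //.
by move=> i _ ix; rewrite bE ifF //; apply/eqP => xi; apply: ix.
Qed.

Lemma opt_weight_fst A :
  \esum_(z in fst @^-1` A) opt_weight z = \esum_(x in A) mu [set x].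
Proof.
rewrite esum_preimage_fst //; apply: eq_esum => x _.
rewrite (eq_esum (b := fun y => (if x == y then mm x else 0)%:E +
     ((pm x - mm x) * r^-1)%:E * (pn y - mm y)%:E)); last first.
  by move=> y _; rewrite /opt_weight /= -EFinM -EFinD mulrAC.
rewrite esumD; last 2 first.
- by move=> y _; rewrite lee_fin; case: ifP.
- by move=> y _; rewrite -EFinM lee_fin !mulr_ge0.
rewrite diag_sum // esumZl; last 2 first.
- exact: mulr_ge0.
- by move=> y; rewrite lee_fin.
by rewrite residual_sum // -EFinM -EFinD residual_scaleK // pmE addrC subrK.
Qed.

Lemma opt_weight_snd A :
  \esum_(z in snd @^-1` A) opt_weight z = \esum_(y in A) nu [set y].
Proof.
rewrite esum_preimage_snd //; apply: eq_esum => y _.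
rewrite (eq_esum (b := fun x => (if x == y then mm y else 0)%:E +
     ((pn y - mm y) * r^-1)%:E * (pm x - mm x)%:E)); last first.
  move=> x _; rewrite /opt_weight /= -EFinM -EFinD [in RHS]mulrC mulrA.
  by case: eqVneq => [->|].
rewrite esumD; last 2 first.
- by move=> x _; rewrite lee_fin; case: ifP.
- by move=> x _; rewrite -EFinM lee_fin !mulr_ge0.
rewrite (diag_sum (fun x => eq_sym x y)) esumZl; last 2 first.
- exact: mulr_ge0.
- by move=> x; rewrite lee_fin.
by rewrite residual_sum // -EFinM -EFinD residual_scaleK // pnE addrC subrK.
Qed.

Let opt_weight1 : \esum_(z in setT) opt_weight z = 1.
Proof. by rewrite -(preimage_setT fst) opt_weight_fst probability_atoms1. Qed.

Definition opt_coupling : probability (discr (T * T)%type) R := wprob opt_weight.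

Lemma opt_coupling_coupling : coupling mu nu opt_coupling.
Proof.
split => A; rewrite wprobE // (measure_atomsE _ (countable_subT A hT)).
  exact: opt_weight_fst.
exact: opt_weight_snd.
Qed.

Lemma tcost_opt_coupling p : (0 < p)%R -> tcost p opt_coupling = 1 - overlap mu nu.
Proof.
move=> p0; rewrite tcostE // overlapE; congr (_ - _); apply: eq_esum => x _.
rewrite wprobE // esum_set1 // /opt_weight /= eqxx.
suff -> : ((pm x - mm x) * (pn x - mm x) = 0)%R by rewrite mul0r addr0.
by rewrite /mm; case: leP => _; rewrite subrr ?mul0r ?mulr0.
Qed.

End optimal_coupling.

Section Wp_overlap.
Context (R : realType) (T : pointedType) (hT : countable [set: T]).
Implicit Types mu nu : probability (discr T) R.

Lemma inf_tcost p mu nu : (0 < p)%R ->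
  ereal_inf [set tcost p pi | pi in coupling mu nu] = 1 - overlap mu nu.
Proof.
move=> p0; apply/le_anti/andP; split.
  rewrite -(tcost_opt_coupling hT mu nu p0); apply: ereal_inf_lbound.
  by exists (opt_coupling mu nu) => //; exact: opt_coupling_coupling.
by apply/ereal_infP => _ [pi cp <-]; exact: tcost_ge_overlap.
Qed.

Lemma Wp_eq_overlap p (m1 m2 m3 m4 : probability (discr T) R) : (0 < p)%R ->
  Wp p m1 m2 = Wp p m3 m4 <-> overlap m1 m2 = overlap m3 m4.
Proof.
move=> p0; rewrite /Wp !inf_tcost //; split => [|->] //.
have c_ge0 mu nu : (0 <= fine (1 - overlap mu nu))%R.
  by rewrite fine_ge0 // suber_ge0 ?overlap_fin_num ?overlap_le1.
have c_inj : fine (1 - overlap m1 m2) = fine (1 - overlap m3 m4) ->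
    overlap m1 m2 = overlap m3 m4.
  rewrite -(fineK (overlap_fin_num hT m1 m2)) -(fineK (overlap_fin_num hT m3 m4)).
  by rewrite -!EFinB /= => c12; congr EFin; lra.
case: ifP => _; last exact: c_inj.
have pinv : (0 < p^-1)%R by rewrite invr_gt0.
by move/(@powR_injective _ _ pinv) => c12; apply: c_inj; apply: c12; rewrite nnegrE.
Qed.

Lemma isometric_embeddingE p (f : probability (discr T) R -> probability (discr T) R) :
  (0 < p)%R ->
  isometric_embedding p f <-> forall mu nu, overlap (f mu) (f nu) = overlap mu nu.
Proof. by move=> p0; split => fE mu nu; apply/(Wp_eq_overlap _ _ _ _ p0). Qed.

End Wp_overlap.

Section delta.
Context (R : realType) (T : pointedType).
Implicit Types m : probability (discr T) R.

Definition delta (x : T) : probability (discr T) R := @dirac _ (discr T) x R.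

Lemma delta_atom x z : delta x [set z] = if z == x then 1 else 0.
Proof.
rewrite /delta /= diracE; have [->|zx] := eqVneq z x; first by rewrite mem_set.
by rewrite memNset // => /= xz; rewrite xz eqxx in zx.
Qed.

Lemma msupport_delta x : msupport (delta x) = [set x].
Proof.
apply/seteqP; split => z; rewrite /msupport /= delta_atom.
  by case: eqVneq => // _; rewrite ltxx.
by move=> ->; rewrite eqxx lte01.
Qed.

Lemma overlap_deltal x m : overlap (delta x) m = m [set x].
Proof.
rewrite /overlap (esum_only1 (x := x)) //.
- by rewrite delta_atom eqxx; apply/min_idPr; exact: probability_le1.
- by move=> i _ ix; rewrite delta_atom ifF; [apply/min_idPl|apply/eqP].
- by rewrite le_min !measure_ge0.
Qed.

Lemma msupport_fine m x : msupport m x ->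
  (0 < fine (m [set x]) <= 1)%R.
Proof.
move=> mx; rewrite fine_gt0 ?mx ?ltey_eq ?fin_num_measure //= -fine1.
by rewrite fine_le ?fin_num_measure ?probability_le1.
Qed.

End delta.
Arguments delta {R T}.

Section overlap_preserving.
Context (R : realType) (T : pointedType) (hT : countable [set: T]).
Variable f : probability (discr T) R -> probability (discr T) R.
Hypothesis hf : forall mu nu, overlap (f mu) (f nu) = overlap mu nu.
Implicit Types m : probability (discr T) R.

Let F x := f (delta x).

Lemma image_delta_disjoint x y z :
  0 < F x [set z] -> 0 < F y [set z] -> x = y.
Proof.
move=> Fxz Fyz; apply: contrapT => xy.
have : 0 < mine (F x [set z]) (F y [set z]) by rewrite lt_min Fxz Fyz.
rewrite (@esum_eq0_term _ _ setT (fun z => mine (F x [set z]) (F y [set z])) z)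
  ?ltxx // => [i _|]; first by rewrite le_min !measure_ge0.
change (overlap (F x) (F y) = 0).
by rewrite /F hf overlap_deltal delta_atom ifF //; apply/eqP => yx; apply: xy.
Qed.

Lemma image_delta_eq0 x w z : 0 < F x [set z] -> w <> x -> F w [set z] = 0.
Proof.
move=> Fxz wx; apply: measure_ngt0 => Fwz.
by apply: wx; exact: image_delta_disjoint Fwz Fxz.
Qed.

(* The [F x] have pairwise disjoint supports, so at most one term of the sum
   is nonzero and the sum is at most [f m [set z]]; equality follows since,
   summed over [z], both sides have mass 1 by
   [overlap (F x) (f m) = m [set x]]. *)
Lemma image_atom_decomp m z :
  f m [set z] = \esum_(x in setT) mine (F x [set z]) (f m [set z]).
Proof.
pose h z := \esum_(x in [set: T]) mine (F x [set z]) (f m [set z]).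
have h_le z' : h z' <= f m [set z'].
  rewrite /h; have [[x0 Fx0]|nF] := pselect (exists x0, 0 < F x0 [set z']).
    rewrite (esum_only1 (x := x0)) ?ge_min ?lexx ?orbT //.
    - by move=> i _ ix; rewrite (image_delta_eq0 Fx0 ix) mine0l.
    - by rewrite le_min !measure_ge0.
  rewrite esum1 // => i _; rewrite measure_ngt0 ?mine0l // => Fi; apply: nF; by exists i.
have h_ge0 z' : 0 <= h z' by apply: esum_ge0 => i _; rewrite le_min !measure_ge0.
have h_sum : \esum_(z in setT) h z = \esum_(z in setT) f m [set z].
  rewrite probability_atoms1 // /h exchange_esum; last first.
    by move=> *; rewrite le_min !measure_ge0.
  rewrite -(probability_atoms1 hT m); apply: eq_esum => x _.
  by rewrite -overlap_deltal -hf.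
have fin : \esum_(z in setT) f m [set z] \is a fin_num by rewrite probability_atoms1.
exact/esym/(le_esum_eq (fun z _ => h_ge0 z) (fun z _ => h_le z) fin h_sum).
Qed.

Lemma image_atom_le x m z : 0 < F x [set z] -> f m [set z] <= F x [set z].
Proof.
move=> Fxz; rewrite image_atom_decomp (esum_only1 (x := x)) ?ge_min ?lexx //.
- by move=> i _ ix; rewrite (image_delta_eq0 Fxz ix) mine0l.
- by rewrite le_min !measure_ge0.
Qed.

Lemma image_atom_eq0 m z : (forall x, ~ (0 < F x [set z])) -> f m [set z] = 0.
Proof.
move=> nF; rewrite image_atom_decomp esum1 // => i _.
by rewrite measure_ngt0 ?mine0l //; exact: nF.
Qed.

Definition fpart x m z := if 0 < F x [set z] then f m [set z] else 0.

Lemma fpart_ge0 x m z : 0 <= fpart x m z.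
Proof. by rewrite /fpart; case: ifP. Qed.

Lemma fpart_out x m z : ~ (0 < F x [set z]) -> fpart x m z = 0.
Proof. by move=> Fxz; rewrite /fpart ifF //; exact/negP. Qed.

Lemma min_image_fpart x m z : mine (F x [set z]) (f m [set z]) = fpart x m z.
Proof.
rewrite /fpart; case: ifPn => Fxz; first by apply/min_idPr; exact: image_atom_le.
by rewrite measure_ngt0 ?mine0l //; exact/negP.
Qed.

Lemma fpart_sum x m : \esum_(z in setT) fpart x m z = m [set x].
Proof.
rewrite -(overlap_deltal x m) -hf; apply: eq_esum => z _.
exact/esym/min_image_fpart.
Qed.

Lemma image_atomE m z : f m [set z] = \esum_(x in setT) fpart x m z.
Proof.
by rewrite {1}image_atom_decomp; apply: eq_esum => x _; exact: min_image_fpart.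
Qed.

Lemma fpart_min m1 m2 x :
  \esum_(z in setT) mine (fpart x m1 z) (fpart x m2 z) =
  mine (m1 [set x]) (m2 [set x]).
Proof.
have min_image z : mine (f m1 [set z]) (f m2 [set z]) =
    \esum_(w in setT) mine (fpart w m1 z) (fpart w m2 z).
  have [[x0 Fx0]|nF] := pselect (exists x0, 0 < F x0 [set z]).
    rewrite (esum_only1 (x := x0)) //.
    - by rewrite /fpart Fx0.
    - move=> i _ ix; have nFi : ~ 0 < F i [set z].
        by move=> Fi; apply: ix; exact: image_delta_disjoint Fi Fx0.
      by rewrite !fpart_out // mine0l.
    - by rewrite le_min !fpart_ge0.
  have nFi i : ~ 0 < F i [set z] by move=> Fi; apply: nF; exists i.
  by rewrite !image_atom_eq0 // ?mine0l // esum1 // => i _; rewrite !fpart_out ?mine0l.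
apply: (@le_esum_eq _ _ setT
  (fun w => \esum_(z in setT) mine (fpart w m1 z) (fpart w m2 z))
  (fun w => mine (m1 [set w]) (m2 [set w])) _ _ _ _ x I).
- by move=> w _; apply: esum_ge0 => z _; rewrite le_min !fpart_ge0.
- move=> w _; rewrite le_min -!fpart_sum; apply/andP; split; apply: le_esum => z _.
    by rewrite ge_min lexx.
  by rewrite ge_min lexx orbT.
- exact: overlap_fin_num.
- rewrite exchange_esum; last by move=> *; rewrite le_min !fpart_ge0.
  rewrite -/(overlap m1 m2) -hf.
  by apply: eq_esum => z _; exact/esym/min_image.
Qed.

Lemma fpart_mono m1 m2 x : m1 [set x] <= m2 [set x] ->
  forall z, fpart x m1 z <= fpart x m2 z.
Proof.
move=> le12 z; apply/min_idPl.
apply: (@le_esum_eq _ _ setT (fun z => mine (fpart x m1 z) (fpart x m2 z))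
  (fpart x m1) _ _ _ _ z I).
- by move=> z' _; rewrite le_min !fpart_ge0.
- by move=> z' _; rewrite ge_min lexx.
- by rewrite fpart_sum fin_num_measure.
- by rewrite fpart_min fpart_sum; apply/min_idPl.
Qed.

End overlap_preserving.

Lemma family_ok_le (R : realType) (T : pointedType) (Phi : @mfamily R T) x s t A :
  family_ok Phi -> (0 < s)%R -> (s <= t)%R -> (t <= 1)%R -> Phi x s A <= Phi x t A.
Proof.
case=> _ _ Phi_mono s0 st t1; have [{}st|ts] := ltP s t; first exact: Phi_mono.
by rewrite (_ : s = t) //; apply/le_anti; rewrite st ts.
Qed.

Section isometry_family.
Context (R : realType) (T : pointedType) (hT : countable [set: T]).
Variables (x0 y0 : T) (hxy : x0 <> y0).
Variable f : probability (discr T) R -> probability (discr T) R.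
Hypothesis hf : forall mu nu, overlap (f mu) (f nu) = overlap mu nu.

Let F x := f (delta x).

Let cntA (A : set T) : countable A := countable_subT A hT.

Definition partner x := if x == x0 then y0 else x0.

Lemma partner_neq x : partner x <> x.
Proof.
rewrite /partner; have [->|xx0] := eqVneq x x0; first by move=> /esym.
by move=> x0x; rewrite x0x eqxx in xx0.
Qed.

Definition clamp01 (t : R) : R := Num.min (Num.max t 0%R) 1%R.

Lemma clamp01_ge0 t : (0 <= clamp01 t)%R.
Proof. by rewrite le_min ler01 le_max lexx orbT. Qed.

Lemma clamp01_le1 t : (clamp01 t <= 1)%R.
Proof. by rewrite ge_min lexx orbT. Qed.

Lemma clamp01_id t : (0 <= t)%R -> (t <= 1)%R -> clamp01 t = t.
Proof. by move=> t0 t1; rewrite /clamp01 max_l // min_l. Qed.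

(* [two_point x t] is [t delta_x + (1 - t) delta_(partner x)]: this is where
   the two distinct points [x0] and [y0] are needed. *)
Definition two_point_weight x t z : \bar R :=
  (if z == x then (clamp01 t)%:E else 0) +
  (if z == partner x then (1 - clamp01 t)%:E else 0).

Lemma two_point_weight_ge0 x t z : 0 <= two_point_weight x t z.
Proof.
rewrite adde_ge0 //; case: ifP => // _.
- by rewrite lee_fin clamp01_ge0.
- by rewrite lee_fin subr_ge0 clamp01_le1.
Qed.

Lemma two_point_weight_sum x t : \esum_(z in setT) two_point_weight x t z = 1.
Proof.
have c0 := clamp01_ge0 t.
have c1 : (0 <= 1 - clamp01 t)%R by rewrite subr_ge0 clamp01_le1.
rewrite esumD; last 2 first.
- by move=> z _; case: ifP; rewrite // lee_fin.
- by move=> z _; case: ifP; rewrite // lee_fin.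
rewrite (esum_only1 (x := x)) ?eqxx ?lee_fin //; last first.
  by move=> i _ ix; rewrite ifF //; apply/eqP.
rewrite (esum_only1 (x := partner x)) ?eqxx ?lee_fin //; last first.
  by move=> i _ ix; rewrite ifF //; apply/eqP.
by rewrite -EFinD addrC subrK.
Qed.

Definition two_point x t : probability (discr T) R := wprob (two_point_weight x t).

Lemma two_point_atomE x t z : two_point x t [set z] = two_point_weight x t z.
Proof.
rewrite wprobE ?esum_set1 ?two_point_weight_ge0 //.
- by move=> ?; exact: two_point_weight_ge0.
- exact: two_point_weight_sum.
Qed.

Lemma two_point_atom x t : two_point x t [set x] = (clamp01 t)%:E.
Proof.
rewrite two_point_atomE /two_point_weight eqxx ifF ?adde0 //; apply/eqP => xp.
exact: partner_neq (esym xp).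
Qed.

Lemma two_point_fine_atom x (m : probability (discr T) R) :
  two_point x (fine (m [set x])) [set x] = m [set x].
Proof.
rewrite two_point_atom clamp01_id ?fineK ?fin_num_measure ?fine_ge0 //.
by rewrite -fine1 fine_le ?fin_num_measure ?probability_le1.
Qed.

Definition isometry_family : @mfamily R T := fun x t =>
  mrestr (f (two_point x t)) (I : measurable (msupport (F x) : set (discr T))).

Lemma isometry_familyE x t A :
  isometry_family x t A = \esum_(z in A) fpart f x (two_point x t) z.
Proof.
transitivity (f (two_point x t) (A `&` msupport (F x))); first by [].
rewrite measure_atomsE // esum_mkcondr; apply: eq_esum => z _; rewrite /fpart.
case: ifPn => [/set_mem -> //|zS].
by rewrite ifF //; apply/negbTE; apply: contra zS => Fz; exact: mem_set.
Qed.

Lemma isometry_family_ok : family_ok isometry_family.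
Proof.
split.
- move=> x y xy; apply/seteqP; split => // z [].
  rewrite /msupport /= !isometry_familyE !esum_set1 ?fpart_ge0 // => Pxz Pyz.
  apply: xy; apply: (image_delta_disjoint hf (z := z)).
  + by apply: contrapT => Fxz; move: Pxz; rewrite fpart_out // ltxx.
  + by apply: contrapT => Fyz; move: Pyz; rewrite fpart_out // ltxx.
- move=> x t /andP[t0 t1]; rewrite isometry_familyE fpart_sum // two_point_atom.
  by rewrite clamp01_id // ltW.
- move=> x s t s0 st t1 A; rewrite !isometry_familyE; apply: le_esum => z _.
  have s1 : (s <= 1)%R by rewrite ltW // (lt_le_trans st t1).
  have t0 : (0 <= t)%R by rewrite ltW // (lt_trans s0 st).
  apply: fpart_mono => //; rewrite !two_point_atom lee_fin !clamp01_id //.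
  - exact: ltW.
  - exact: ltW.
Qed.

Lemma isometry_family_generates : generates isometry_family f.
Proof.
move=> mu A; rewrite measure_atomsE //.
rewrite (eq_esum (fun z _ => image_atomE hT hf mu z)) exchange_esum; last first.
  by move=> *; exact: fpart_ge0.
rewrite (esumID (msupport mu)) => [|x _]; last by apply: esum_ge0 => *; exact: fpart_ge0.
rewrite setTI [X in _ + X]esum1 ?adde0 => [|x [_ nmux]]; last first.
  apply: esum1 => z _; apply: (@esum_eq0_term _ _ setT (fpart f x mu)) => //.
  - by move=> *; exact: fpart_ge0.
  - by rewrite fpart_sum // measure_ngt0.
apply: eq_esum => x _; rewrite isometry_familyE; apply: eq_esum => z _.
by apply/le_anti/andP; split; apply: fpart_mono => //; rewrite two_point_fine_atom.
Qed.

Lemma generates_delta (Psi : @mfamily R T) : generates Psi f ->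
  forall w B, F w B = Psi w 1%R B.
Proof.
by move=> gen w B; rewrite /F gen msupport_delta esum_set1 // delta_atom eqxx fine1.
Qed.

Lemma isometry_family_unique (Psi : @mfamily R T) :
  family_ok Psi -> generates Psi f ->
  forall x t, (0 < t <= 1)%R -> forall A, Psi x t A = isometry_family x t A.
Proof.
move=> Pok gen x t /andP[t0 t1] A; pose S : set (discr T) := msupport (F x).
have t_clamp : clamp01 t = t by rewrite clamp01_id // ltW.
have Psi_null w s B : (0 < s <= 1)%R -> (forall z, B z -> ~ 0 < F w [set z]) ->
    Psi w s B = 0.
  case/andP=> s0 s1 BF; apply/le_anti; rewrite measure_ge0 andbT.
  rewrite (le_trans (family_ok_le _ _ Pok s0 s1 (lexx 1%R))) // -generates_delta //.
  by rewrite measure_atomsE // esum1 // => z /BF /measure_ngt0.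
have -> : Psi x t A = Psi x t (A `&` S).
  rewrite !measure_atomsE // (esumID S) => [|z _]; last exact: measure_ge0.
  rewrite [X in _ + X]esum1 ?adde0 // => z [_ Sz].
  by apply: Psi_null; rewrite ?t0 // => _ ->; exact: Sz.
transitivity (f (two_point x t) (A `&` S)); last by [].
rewrite gen (esum_only1 (x := x)) //.
- by rewrite two_point_atom t_clamp.
- move=> w /msupport_fine mw wx; apply: Psi_null => // z [_ Sz].
  by rewrite (image_delta_eq0 hf Sz wx) ltxx.
- by rewrite /msupport /= two_point_atom t_clamp lte_fin.
Qed.

End isometry_family.

Section generated_map.
Context (R : realType) (T : pointedType) (hT : countable [set: T]).
Variable Phi : @mfamily R T.
Hypothesis Phi_ok : family_ok Phi.
Implicit Types mu nu : probability (discr T) R.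

Let cntA (A : set T) : countable A := countable_subT A hT.

Lemma family_disjoint x y z :
  0 < Phi x 1%R [set z] -> 0 < Phi y 1%R [set z] -> x = y.
Proof.
case: Phi_ok => Phi_disj _ _ Pxz Pyz; apply: contrapT => /Phi_disj/seteqP[+ _].
by move=> /(_ z (conj Pxz Pyz)).
Qed.

Lemma family_mass x t : (0 < t <= 1)%R ->
  \esum_(z in setT) Phi x t [set z] = t%:E.
Proof.
by case: Phi_ok => _ Phi_mass _ t01; rewrite -measure_atomsE //; exact: Phi_mass.
Qed.

Definition gen_weight mu z : \bar R :=
  \esum_(x in msupport mu) Phi x (fine (mu [set x])) [set z].

Lemma gen_weight_ge0 mu z : 0 <= gen_weight mu z.
Proof. by apply: esum_ge0 => x _; exact: measure_ge0. Qed.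

Lemma gen_weight_sum mu : \esum_(z in setT) gen_weight mu z = 1.
Proof.
rewrite exchange_esum; last by move=> *; exact: measure_ge0.
rewrite (eq_esum (fun x mx => family_mass x (msupport_fine mx))).
rewrite -(probability_atoms1 hT mu) [RHS](esumID (msupport mu)) => [|x _]; last first.
  exact: measure_ge0.
rewrite setTI [X in _ + X]esum1 ?adde0 => [|x [_ mx]]; last exact: measure_ngt0.
by apply: eq_esum => x _; rewrite fineK ?fin_num_measure.
Qed.

Definition gen_map mu : probability (discr T) R := wprob (gen_weight mu).

Lemma gen_mapE mu A : gen_map mu A = \esum_(z in A) gen_weight mu z.
Proof. by rewrite wprobE //; [exact: gen_weight_ge0|exact: gen_weight_sum]. Qed.

Lemma gen_map_generates : generates Phi gen_map.
Proof.
move=> mu A; rewrite gen_mapE exchange_esum; last by move=> *; exact: measure_ge0.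
by apply: eq_esum => x _; rewrite -measure_atomsE.
Qed.

Definition gen_part mu x z : \bar R :=
  if x \in msupport mu then Phi x (fine (mu [set x])) [set z] else 0.

Lemma gen_part_ge0 mu x z : 0 <= gen_part mu x z.
Proof. by rewrite /gen_part; case: ifP. Qed.

Lemma gen_part_out mu x z : ~ (0 < Phi x 1%R [set z]) -> gen_part mu x z = 0.
Proof.
move=> /measure_ngt0 Px1; apply/le_anti; rewrite gen_part_ge0 andbT -Px1.
rewrite /gen_part; case: ifPn => [/set_mem /msupport_fine/andP[m0 m1]|_].
  exact: family_ok_le.
exact: measure_ge0.
Qed.

Lemma min_gen_weight mu nu z : mine (gen_weight mu z) (gen_weight nu z) =
  \esum_(x in setT) mine (gen_part mu x z) (gen_part nu x z).
Proof.
have wE m : gen_weight m z = \esum_(x in setT) gen_part m x z.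
  by rewrite /gen_weight esum_mkcond.
rewrite !wE.
have [[x0 Px0]|nP] := pselect (exists x0, 0 < Phi x0 1%R [set z]); last first.
  have nPx x : ~ 0 < Phi x 1%R [set z] by move=> Px; apply: nP; exists x.
  by rewrite !esum1 ?mine0l // => x _; rewrite !gen_part_out ?mine0l.
have gen_part0 m x : x <> x0 -> gen_part m x z = 0.
  by move=> xx0; apply: gen_part_out => Px; apply: xx0; exact: family_disjoint Px Px0.
rewrite !(esum_only1 (x := x0)) ?le_min ?gen_part_ge0 // => x _ xx0.
  by rewrite !gen_part0 // mine0l.
all: exact: gen_part0.
Qed.

Lemma esum_min_family x s t : (0 < s)%R -> (s <= t)%R -> (t <= 1)%R ->
  \esum_(z in setT) mine (Phi x s [set z]) (Phi x t [set z]) = s%:E.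
Proof.
move=> s0 st t1; have s01 : (0 < s <= 1)%R by rewrite s0 (le_trans st t1).
rewrite -(family_mass x s01).
by apply: eq_esum => z _; apply/min_idPl; exact: family_ok_le.
Qed.

Lemma gen_part_min mu nu x :
  \esum_(z in setT) mine (gen_part mu x z) (gen_part nu x z) =
  mine (mu [set x]) (nu [set x]).
Proof.
have gen_part0 (m : probability (discr T) R) z : ~ msupport m x -> gen_part m x z = 0.
  by move=> mx; rewrite /gen_part ifF //; apply/negP => /set_mem.
have [mx|mx] := pselect (msupport mu x); last first.
  rewrite esum1 => [|z _]; last by rewrite gen_part0 // mine0l // gen_part_ge0.
  have mu0 : mu [set x] = 0 by exact: measure_ngt0.
  by rewrite mu0 mine0l.
have [nx|nx] := pselect (msupport nu x); last first.
  rewrite esum1 => [|z _]; last by rewrite (gen_part0 nu) // minC mine0l // gen_part_ge0.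
  have nu0 : nu [set x] = 0 by exact: measure_ngt0.
  by rewrite nu0 minC mine0l.
rewrite (eq_esum (b := fun z => mine (Phi x (fine (mu [set x])) [set z])
                                    (Phi x (fine (nu [set x])) [set z]))); last first.
  by move=> z _; rewrite /gen_part !mem_set.
have /andP[s0 s1] := msupport_fine mx; have /andP[t0 t1] := msupport_fine nx.
rewrite -[in RHS](fineK (fin_num_measure mu [set x] _)) //.
rewrite -[in RHS](fineK (fin_num_measure nu [set x] _)) //.
have [st|ts] := leP (fine (mu [set x])) (fine (nu [set x])).
  by rewrite esum_min_family //; apply/esym/min_idPl; rewrite lee_fin.
rewrite (eq_esum (fun z _ => minC _ _)) (esum_min_family _ t0 (ltW ts) s1).
by apply/esym/min_idPr; rewrite lee_fin ltW.
Qed.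

Lemma overlap_gen_map mu nu : overlap (gen_map mu) (gen_map nu) = overlap mu nu.
Proof.
rewrite /overlap (eq_esum (b := fun z => mine (gen_weight mu z) (gen_weight nu z))).
  rewrite (eq_esum (fun z _ => min_gen_weight mu nu z)) exchange_esum.
    by apply: eq_esum => x _; exact: gen_part_min.
  by move=> *; rewrite le_min !gen_part_ge0.
by move=> z _; rewrite !gen_mapE !esum_set1 ?gen_weight_ge0.
Qed.

End generated_map.

Local Close Scope ereal_scope.
Unset Implicit Arguments.

Theorem theorem2p3 (R : realType) (T : pointedType)
    (hT : countable [set: T]) (x0 y0 : T) (hxy : x0 <> y0)
    (p : R) (hp : 0 < p) :
  (forall f : probability (discr T) R -> probability (discr T) R,
     isometric_embedding p f ->
     exists Phi : @mfamily R T,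
       [/\ family_ok Phi, generates Phi f &
           forall Psi : @mfamily R T, family_ok Psi -> generates Psi f ->
             forall x t, 0 < t <= 1 -> forall A, Psi x t A = Phi x t A]) /\
  (forall Phi : @mfamily R T, family_ok Phi ->
     exists f : probability (discr T) R -> probability (discr T) R,
       isometric_embedding p f /\ generates Phi f).
Proof.
split => [f /(isometric_embeddingE hT _ hp) f_overlap|Phi Phi_ok].
  exists (isometry_family x0 y0 f); split.
  - exact: isometry_family_ok.
  - exact: isometry_family_generates.
  - exact: isometry_family_unique.
exists (gen_map Phi); split; last exact: gen_map_generates.
by apply/(isometric_embeddingE hT _ hp) => mu nu; exact: overlap_gen_map.
Qed.
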